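(* For all $n\in\mathbb{N}$, $\mathrm{SL}_n(\mathcal{A}(\bm{p}))=\mathrm{E}_n(\mathcal{A}(\bm{p}))$; that is, every $n\times n$ matrix over $\mathcal{A}(\bm{p})$ with determinant $\varepsilon$ is a finite product of elementary matrices.
   Context: Fix $\bm{p}:\mathbb{N}_0\to(0,\infty)$ with $\lim_{n\to\infty}\bm{p}(n)^{1/n}=\infty$. For an entire function $f$ write $f(z)=\sum_{n\ge0}\widehat f(n)z^n$. $\mathcal{A}(\bm{p})$ is the set of entire functions $f$ with $\sup_{n\ge 0}\bm{p}(n)|\widehat f(n)|<\infty$, with pointwise addition and scalar multiplication and the weighted Hadamard product $(f\ast g)(z)=\sum_{n\ge0}\bm{p}(n)\widehat f(n)\widehat g(n)z^n$; it is a commutative unital ring with unit $\varepsilon(z)=\sum_{n\ge0}\frac{z^n}{\bm{p}(n)}$. Determinants and matrix products are computed using $\ast$. $\mathrm{SL}_n(\mathcal{A}(\bm{p}))$ is the group of $n\times n$ matrices with determinant $\varepsilon$; an elementary matrix is $I_n+\alpha\mathbf{e}_{ij}$ with $i\ne j$, $\alpha\in\mathcal{A}(\bm{p})$, where $I_n$ is diagonal with entries $\varepsilon$ and $\mathbf{e}_{ij}$ has $\varepsilon$ in position $(i,j)$ and $0$ elsewhere; $\mathrm{E}_n(\mathcal{A}(\bm{p}))$ is the subgroup generated by elementary matrices. *)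

From HB Require Import structures.
From mathcomp Require Import all_boot all_order all_algebra all_fingroup.
From mathcomp Require Import all_classical all_reals all_analysis.
From mathcomp Require Import complex.
From Stdlib Require List.
Set Implicit Arguments. Unset Strict Implicit. Unset Printing Implicit Defensive.
Import Order.TTheory GRing.Theory Num.Theory.
Local Open Scope ring_scope.
Local Open Scope complex_scope.

Section APdefs.
Variable R : realType.
Local Notation C := (R[i]).

(* An entire function f is represented by its Taylor coefficient sequence
   n |-> \hat f(n); a complex sequence is the coefficient sequence of an entire
   function iff |a_n| r^n is bounded for every r > 0 (Cauchy--Hadamard). *)
Definition coef_entire (f : nat -> C) : Prop :=
  forall r : R, 0 < r -> exists M : R, forall n, `|f n| * (r ^+ n)%:C <= M%:C.

Definition inA (p : nat -> R) (f : nat -> C) : Prop :=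
  coef_entire f /\ exists M : R, forall n, (p n)%:C * `|f n| <= M%:C.

Definition hadd (f g : nat -> C) : nat -> C := fun k => f k + g k.
Definition hzero : nat -> C := fun _ => 0.
Definition hscale (c : C) (f : nat -> C) : nat -> C := fun k => c * f k.
Definition hmul (p : nat -> R) (f g : nat -> C) : nat -> C :=
  fun k => (p k)%:C * f k * g k.
(* the unit epsilon(z) = sum z^n / p(n) *)
Definition eps (p : nat -> R) : nat -> C := fun k => ((p k)^-1)%:C.

Definition hmat (n : nat) := 'I_n -> 'I_n -> (nat -> C).

Definition hdet (p : nat -> R) (n : nat) (A : hmat n) : nat -> C :=
  \big[hadd/hzero]_(s : 'S_n)
     hscale ((-1) ^+ s) (\big[hmul p/eps p]_(i < n) A i (s i)).

Definition hmulmx (p : nat -> R) (n : nat) (A B : hmat n) : hmat n :=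
  fun i j => \big[hadd/hzero]_(k < n) hmul p (A i k) (B k j).

Definition hId (p : nat -> R) (n : nat) : hmat n :=
  fun i j => if i == j then eps p else hzero.

Definition hE (p : nat -> R) (n : nat) (i j : 'I_n) : hmat n :=
  fun k l => if (k == i) && (l == j) then eps p else hzero.

Definition helem (p : nat -> R) (n : nat) (i j : 'I_n) (alpha : nat -> C) : hmat n :=
  fun k l => hadd (hId p k l) (hmul p alpha (hE p i j k l)).

Definition inSLn (p : nat -> R) (n : nat) (A : hmat n) : Prop :=
  (forall i j, inA p (A i j)) /\ hdet p A = eps p.

Definition elem_ok (p : nat -> R) (n : nat) (e : 'I_n * 'I_n * (nat -> C)) : Prop :=
  e.1.1 != e.1.2 /\ inA p e.2.

Definition inElem (p : nat -> R) (n : nat) (A : hmat n) : Prop :=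
  exists es : seq ('I_n * 'I_n * (nat -> C)),
    (forall e, List.In e es -> elem_ok p e) /\
    A = foldr (fun e M => hmulmx p (helem p e.1.1 e.1.2 e.2) M) (@hId p n) es.

End APdefs.

(* The map f |-> (p(k) \hat f(k))_k identifies A(p) with the ring of bounded
   complex sequences: p(k)^(1/k) -> oo makes every bounded sequence divided by p
   the coefficient sequence of an entire function. A matrix in SL_n(A(p)) thus
   becomes a bounded sequence of complex matrices M_k of determinant 1, and it
   suffices to write all the M_k as one word in elementary matrices whose
   coefficients are bounded in k. This is Gaussian elimination performed
   uniformly in k: the adjugate bounds some entry of the first column away from 0
   uniformly in k, one row addition brings a large entry to the corner, two
   transvections make the corner 1, block transvections clear its row and
   column, and induction on n handles the remaining block. *)

From HB Require Import structures.
From mathcomp Require Import all_boot all_order all_algebra all_fingroup.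
From mathcomp Require Import all_classical all_reals all_analysis.
From mathcomp Require Import complex.
From mathcomp Require Import ring.
From Stdlib Require List.
Import Order.TTheory GRing.Theory Num.Theory.
Set Implicit Arguments. Unset Strict Implicit. Unset Printing Implicit Defensive.

Section ElementarySequences.
Local Open Scope ring_scope.
Variable F : numFieldType.

Definition elemmx n (a b : 'I_n) (c : F) : 'M[F]_n := 1%:M + c *: delta_mx a b.

Definition bounded_seq (c : nat -> F) := exists B, forall k, `|c k| <= B.

Definition bounded_mxseq m n (M : nat -> 'M[F]_(m, n)) :=
  exists B, forall k i j, `|M k i j| <= B.

(* Elementary matrices over the ring of bounded sequences: a sequence of
   matrices is in E_n iff it factors, uniformly in k, as one fixed word of
   elementary matrices whose coefficient sequences are bounded. *)
Inductive elementary_seq n : (nat -> 'M[F]_n) -> Prop :=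
| elementary_seq1 : elementary_seq (fun=> 1%:M)
| elementary_seq_cons a b c M : a != b -> bounded_seq c -> elementary_seq M ->
    elementary_seq (fun k => elemmx a b (c k) *m M k).

Lemma elementary_seq_eq n (M N : nat -> 'M[F]_n) :
  M =1 N -> elementary_seq N -> elementary_seq M.
Proof. by move=> /funext ->. Qed.

Lemma elementary_seq_elemmx n (a b : 'I_n) (c : nat -> F) :
  a != b -> bounded_seq c -> elementary_seq (fun k => elemmx a b (c k)).
Proof.
move=> ab bc; apply: (elementary_seq_eq _ (elementary_seq_cons ab bc (elementary_seq1 _))).
by move=> k; rewrite mulmx1.
Qed.

Lemma elementary_seqM n (M N : nat -> 'M[F]_n) :
  elementary_seq M -> elementary_seq N -> elementary_seq (fun k => M k *m N k).
Proof.
move=> dM dN; elim: dM => [|a b c {}M ab bc _ IH].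
  by apply: elementary_seq_eq dN => k; rewrite mul1mx.
by apply: (elementary_seq_eq _ (elementary_seq_cons ab bc IH)) => k; rewrite mulmxA.
Qed.

Lemma elemmxNK n (a b : 'I_n) (c : F) :
  a != b -> elemmx a b (- c) *m elemmx a b c = 1%:M.
Proof.
move=> ab; rewrite /elemmx mulmxDl mul1mx mulmxDr mulmx1 -scalemxAl -scalemxAr.
by rewrite mul_delta_mx_cond eq_sym (negPf ab) mulr0n !scaler0 addr0 scaleNr addrK.
Qed.

Lemma elementary_seq_inv n (E : nat -> 'M[F]_n) : elementary_seq E ->
  exists2 E', elementary_seq E' & forall k, E' k *m E k = 1%:M.
Proof.
elim=> [|a b c M ab [B bc] _ [M' dM' M'M]].
  by exists (fun=> 1%:M) => [|k]; rewrite ?mulmx1 //; exact: elementary_seq1.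
exists (fun k => M' k *m elemmx a b (- c k)).
  apply: elementary_seqM dM' (elementary_seq_elemmx ab _).
  by exists B => k; rewrite normrN.
by move=> k; rewrite -mulmxA (mulmxA (elemmx _ _ _)) elemmxNK ?mul1mx.
Qed.

Lemma elementary_seq_mulKl n (E M : nat -> 'M[F]_n) :
  elementary_seq E -> elementary_seq (fun k => E k *m M k) -> elementary_seq M.
Proof.
move=> /elementary_seq_inv [E' dE' E'E] /(elementary_seqM dE').
by apply: elementary_seq_eq => k; rewrite mulmxA E'E mul1mx.
Qed.

Lemma elementary_seq_mulKr n (E M : nat -> 'M[F]_n) :
  elementary_seq E -> elementary_seq (fun k => M k *m E k) -> elementary_seq M.
Proof.
move=> /elementary_seq_inv [E' dE' E'E] /elementary_seqM /(_ dE').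
by apply: elementary_seq_eq => k; rewrite -mulmxA (mulmx1C (E'E k)) mulmx1.
Qed.

Lemma trmx_elemmx n (a b : 'I_n) (c : F) : (elemmx a b c)^T = elemmx b a c.
Proof. by rewrite /elemmx linearD linearZ /= trmx1 trmx_delta. Qed.

Lemma elementary_seq_tr n (M : nat -> 'M[F]_n) :
  elementary_seq M -> elementary_seq (fun k => (M k)^T).
Proof.
elim=> [|a b c {}M ab bc _ IH].
  by apply: (elementary_seq_eq _ (elementary_seq1 _)) => k; rewrite trmx1.
have ba : b != a by rewrite eq_sym.
apply: (elementary_seq_eq _ (elementary_seqM IH (elementary_seq_elemmx ba bc))).
by move=> k; rewrite trmx_mul trmx_elemmx.
Qed.

Lemma delta_mx_block_ur m1 m2 n1 n2 (i : 'I_m1) (j : 'I_n2) :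
  delta_mx (lshift m2 i) (rshift n1 j)
  = block_mx 0 (delta_mx i j) 0 0 :> 'M[F]_(m1 + m2, n1 + n2).
Proof. by rewrite delta_mx_ushift delta_mx_rshift -row_mx0. Qed.

Lemma delta_mx_block_dr m1 m2 n1 n2 (i : 'I_m2) (j : 'I_n2) :
  delta_mx (rshift m1 i) (rshift n1 j)
  = block_mx 0 0 0 (delta_mx i j) :> 'M[F]_(m1 + m2, n1 + n2).
Proof. by rewrite delta_mx_dshift delta_mx_rshift -row_mx0. Qed.

Lemma lift0_mx1 n : lift0_mx (1%:M : 'M[F]_n) = 1%:M.
Proof. by rewrite /lift0_mx -scalar_mx_block. Qed.

Lemma lift0_mxM n (A B : 'M[F]_n) : lift0_mx (A *m B) = lift0_mx A *m lift0_mx B.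
Proof. by rewrite /lift0_mx mulmx_block !mulmx0 !mul0mx !addr0 !add0r mulmx1. Qed.

Lemma lift0_mx_elemmx n (a b : 'I_n) (c : F) :
  lift0_mx (elemmx a b c) = elemmx (rshift 1 a) (rshift 1 b) c.
Proof.
rewrite /elemmx delta_mx_block_dr (scalar_mx_block 1 n) scale_block_mx add_block_mx.
by rewrite !scaler0 !addr0.
Qed.

Lemma elementary_seq_lift0 n (M : nat -> 'M[F]_n) :
  elementary_seq M -> elementary_seq (fun k => lift0_mx (M k)).
Proof.
elim=> [|a b c {}M ab bc _ IH].
  by apply: (elementary_seq_eq _ (elementary_seq1 _)) => k; rewrite lift0_mx1.
have ab' : rshift 1 a != rshift 1 b by rewrite eq_rshift.
apply: (elementary_seq_eq _ (elementary_seq_cons ab' bc IH)) => k.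
by rewrite lift0_mxM lift0_mx_elemmx.
Qed.

Lemma mul_uunip m n (u v : 'M[F]_(m, n)) :
  block_mx 1%:M u 0 1%:M *m block_mx 1%:M v 0 1%:M = block_mx 1%:M (u + v) 0 1%:M.
Proof.
by rewrite mulmx_block !mulmx0 !mul0mx !mulmx1 !mul1mx !addr0 add0r addrC.
Qed.

Lemma uunip_delta m n (i : 'I_m) (j : 'I_n) (x : F) :
  block_mx 1%:M (x *: delta_mx i j) 0 1%:M = elemmx (lshift n i) (rshift m j) x.
Proof.
rewrite /elemmx delta_mx_block_ur (scalar_mx_block m n) scale_block_mx add_block_mx.
by rewrite !scaler0 !addr0 add0r.
Qed.

Lemma elementary_seq_uunip m n (u : nat -> 'M[F]_(m, n)) : bounded_mxseq u ->
  elementary_seq (fun k => block_mx 1%:M (u k) 0 1%:M).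
Proof.
move=> [B bu].
pose U (r : seq ('I_m * 'I_n)) k :=
  block_mx 1%:M (\sum_(x <- r) u k x.1 x.2 *: delta_mx x.1 x.2) 0 1%:M.
suff dU r : elementary_seq (U r).
  apply: (elementary_seq_eq _ (dU (index_enum _))) => k.
  by rewrite /U -(pair_big xpredT xpredT (fun i j => u k i j *: delta_mx i j)) -matrix_sum_delta.
elim: r => [|[i j] r IH].
  by apply: (elementary_seq_eq _ (elementary_seq1 _)) => k; rewrite /U big_nil -scalar_mx_block.
apply: (elementary_seq_eq _ (elementary_seq_cons (c := fun k => u k i j) _ _ IH)) => [k||].
- by rewrite /U big_cons -mul_uunip uunip_delta.
- by rewrite eq_lrshift.
- by exists B.
Qed.

Lemma uunip_mulmxE m n p (u : 'M[F]_(m, n)) (A : 'M[F]_(m + n, p)) i j :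
  (block_mx 1%:M u 0 1%:M *m A) (lshift n i) j = A (lshift n i) j + (u *m dsubmx A) i j.
Proof.
rewrite -{1}[A]vsubmxK mul_block_col col_mxEu mul1mx [LHS]mxE.
by rewrite [usubmx _ _ _]mxE.
Qed.

Lemma elementary_seq_lunip m n (v : nat -> 'M[F]_(n, m)) : bounded_mxseq v ->
  elementary_seq (fun k => block_mx 1%:M 0 (v k) 1%:M).
Proof.
move=> [B bv]; have bvT : bounded_mxseq (fun k => (v k)^T).
  by exists B => k i j; rewrite mxE.
apply: (elementary_seq_eq _ (elementary_seq_tr (elementary_seq_uunip bvT))) => k.
by rewrite tr_block_mx trmxK trmx0 !trmx1.
Qed.

Lemma bounded_mxseq1 n : bounded_mxseq (fun=> 1%:M : 'M[F]_n).
Proof. by exists 1 => k i j; rewrite mxE; case: (i == j); rewrite ?normr1 ?normr0. Qed.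

Lemma bounded_mxseqD m n (M N : nat -> 'M[F]_(m, n)) :
  bounded_mxseq M -> bounded_mxseq N -> bounded_mxseq (fun k => M k + N k).
Proof.
move=> [B1 bM] [B2 bN]; exists (B1 + B2) => k i j.
by rewrite mxE (le_trans (ler_normD _ _)) ?lerD.
Qed.

Lemma bounded_mxseqN m n (M : nat -> 'M[F]_(m, n)) :
  bounded_mxseq M -> bounded_mxseq (fun k => - M k).
Proof. by move=> [B bM]; exists B => k i j; rewrite mxE normrN. Qed.

Lemma bounded_mxseqM m n p (M : nat -> 'M[F]_(m, n)) (N : nat -> 'M[F]_(n, p)) :
  bounded_mxseq M -> bounded_mxseq N -> bounded_mxseq (fun k => M k *m N k).
Proof.
move=> [B1 bM] [B2 bN]; exists (n%:R * (B1 * B2)) => k i j.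
rewrite mxE (le_trans (ler_norm_sum _ _ _)) //.
have -> : n%:R * (B1 * B2) = \sum_(l < n) B1 * B2 by rewrite sumr_const card_ord mulr_natl.
by apply: ler_sum => l _; rewrite normrM ler_pM.
Qed.

Lemma bounded_elemmx n (a b : 'I_n) (c : nat -> F) :
  bounded_seq c -> bounded_mxseq (fun k => elemmx a b (c k)).
Proof.
move=> [B bc]; apply: bounded_mxseqD (bounded_mxseq1 _) _.
exists B => k i j; rewrite !mxE normrM.
by case: (_ && _); rewrite ?normr1 ?mulr1 ?normr0 ?mulr0 // (le_trans _ (bc k)).
Qed.

Lemma elementary_seq_bounded n (M : nat -> 'M[F]_n) :
  elementary_seq M -> bounded_mxseq M.
Proof.
elim=> [|a b c {}M _ bc _ IH]; first exact: bounded_mxseq1.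
exact: bounded_mxseqM (bounded_elemmx _ _ bc) IH.
Qed.

Lemma det_elemmx n (a b : 'I_n) (c : F) : a != b -> \det (elemmx a b c) = 1.
Proof.
wlog ba : a b / (b < a)%N => [hwlog|ab].
  case: (ltngtP a b) => [ab _|ba /hwlog -> //|/val_inj ->]; last by rewrite eqxx.
  by rewrite -det_tr trmx_elemmx hwlog // neq_ltn ab orbT.
rewrite det_trig; last first.
  apply/forallP => i; apply/forallP => j; apply/implyP => ij; rewrite !mxE.
  have -> : (i == j) = false := ltn_eqF ij.
  have -> : (i == a) && (j == b) = false.
    apply/negP => /andP [/eqP ia /eqP jb].
    by move: ba; rewrite -ia -jb => /(ltn_trans ij); rewrite ltnn.
  by rewrite mulr0 addr0.
apply: big1 => i _; rewrite !mxE eqxx mulr1n.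
by case: eqP => [-> |] /=; rewrite ?(negPf ab) ?mulr0 ?addr0.
Qed.

Lemma elementary_seq_det n (M : nat -> 'M[F]_n) :
  elementary_seq M -> forall k, \det (M k) = 1.
Proof.
elim=> [|a b c {}M ab _ _ IH] k; first exact: det1.
by rewrite det_mulmx det_elemmx ?IH ?mulr1.
Qed.

Lemma elemmx_mulE n (a b : 'I_n) (c : F) (M : 'M[F]_n) i j :
  (elemmx a b c *m M) i j = M i j + (i == a)%:R * c * M b j.
Proof.
rewrite mulmxDl mul1mx -scalemxAl !mxE (bigD1 b) //= big1 => [|l /negPf lb].
  by rewrite !mxE eqxx andbT addr0 mulrCA mulrA.
by rewrite mxE lb andbF mul0r.
Qed.

Lemma det_bound n (A : 'M[F]_n) (B : F) : 0 <= B -> (forall i j, `|A i j| <= B) ->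
  `|\det A| <= #|{: 'S_n}|%:R * B ^+ n.
Proof.
move=> B0 bA; rewrite /determinant (le_trans (ler_norm_sum _ _ _)) //.
rewrite mulr_natl -sumr_const ler_sum // => s _.
rewrite normrM normrX normrN1 expr1n mul1r normr_prod -[n in B ^+ n]card_ord -prodr_const.
by rewrite ler_prod // => i _; rewrite normr_ge0 bA.
Qed.

(* A bounded matrix of determinant 1 has, in each column, an entry bounded
   away from 0: expand 1 = \det M along that column and bound the cofactors. *)
Lemma det1_col_lb n (B : F) : 0 <= B -> exists2 d : F, 0 < d &
  forall (M : 'M[F]_n.+1) j, (forall i j, `|M i j| <= B) -> \det M = 1 ->
  exists i, d <= `|M i j|.
Proof.
move=> B0; set K := 1 + #|{: 'S_n}|%:R * B ^+ n.
have K0 : 0 < K by rewrite ltr_pwDl // mulr_ge0 // exprn_ge0.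
exists (n.+1%:R * K)^-1 => [|M j bM dM]; first by rewrite invr_gt0 mulr_gt0.
apply/existsP; apply: contraT => /existsPn small.
have colE : (\adj M *m M) j j = 1 by rewrite mul_adj_mx dM mxE eqxx.
suff : `|(\adj M *m M) j j| < 1 by rewrite colE normr1 ltxx.
rewrite mxE (le_lt_trans (ler_norm_sum _ _ _)) //.
have -> : 1 = \sum_(i < n.+1) K * (n.+1%:R * K)^-1.
  by rewrite sumr_const card_ord -[RHS]mulr_natl mulrA mulfV ?gt_eqF ?mulr_gt0.
apply: ltr_sum => [|i _]; first by apply/hasP; exists ord0; rewrite ?mem_index_enum.
rewrite normrM ltr_pM //.
  rewrite mxE /cofactor normrM normrX normrN1 expr1n mul1r.
  by rewrite (le_lt_trans (det_bound B0 _)) ?ltr_pwDl // => a b; rewrite !mxE.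
by rewrite real_ltNge ?normr_real ?gtr0_real ?invr_gt0 ?mulr_gt0 // small.
Qed.

Definition SL_elementary n := forall M : nat -> 'M[F]_n,
  bounded_mxseq M -> (forall k, \det (M k) = 1) -> elementary_seq M.

(* Clearing the first column and the first row with two block transvections
   leaves [lift0_mx (D - s r)], to which the induction hypothesis applies. *)
Lemma SL_elementary_corner n : SL_elementary n ->
  forall M : nat -> 'M[F]_(1 + n), bounded_mxseq M -> (forall k, \det (M k) = 1) ->
  (forall k, ulsubmx (M k) = 1%:M) -> elementary_seq M.
Proof.
move=> IH M [B bM] dM ulM.
pose r k := ursubmx (M k); pose s k := dlsubmx (M k); pose D k := drsubmx (M k).
have br : bounded_mxseq r by exists B => k i j; rewrite !mxE.
have bs : bounded_mxseq s by exists B => k i j; rewrite !mxE.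
have bD : bounded_mxseq D by exists B => k i j; rewrite !mxE.
have dL := elementary_seq_lunip (bounded_mxseqN bs).
have dU := elementary_seq_uunip (bounded_mxseqN br).
have clear k : block_mx 1%:M 0 (- s k) 1%:M *m M k *m block_mx 1%:M (- r k) 0 1%:M
               = lift0_mx (D k - s k *m r k).
  rewrite -[M k]submxK ulM /lift0_mx !mulmx_block.
  by rewrite !(mulmx0, mul0mx, mulmx1, mul1mx, addr0, add0r, mulNmx, addNr, addrN) addrC.
apply: (elementary_seq_mulKl dL); apply: (elementary_seq_mulKr dU).
apply: (elementary_seq_eq clear); apply: elementary_seq_lift0; apply: IH.
  exact: bounded_mxseqD bD (bounded_mxseqN (bounded_mxseqM bs br)).
move=> k; have := congr1 determinant (clear k).
rewrite /lift0_mx det_ublock det1 mul1r => <-.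
by rewrite !det_mulmx dM (elementary_seq_det dL) (elementary_seq_det dU) !mulr1.
Qed.

(* Two transvections between the first two rows turn a corner entry bounded
   away from 0 into 1; the coefficients stay bounded because of that bound. *)
Lemma SL_elementary_pivot_unit n : SL_elementary n.+1 ->
  forall (M : nat -> 'M[F]_(1 + n.+1)) (h : F), 0 < h ->
  bounded_mxseq M -> (forall k, \det (M k) = 1) ->
  (forall k, h <= `|M k (lshift _ 0) (lshift _ 0)|) -> elementary_seq M.
Proof.
move=> IH M h h0 [B bM] dM hM.
set i0 := lshift n.+1 (0 : 'I_1); set i1 := rshift 1 (0 : 'I_n.+1).
have i10 : i1 != i0 by rewrite eq_rlshift.
have M00 k : M k i0 i0 != 0 by rewrite -normr_gt0 (lt_le_trans h0).
pose x k := (1 - M k i1 i0) / M k i0 i0; pose y k := 1 - M k i0 i0.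
have bx : bounded_seq x.
  exists ((1 + B) / h) => k; rewrite normrM normfV ler_pM ?invr_ge0 //.
    by rewrite (le_trans (ler_normB _ _)) // normr1 lerD.
  by rewrite lef_pV2 ?posrE ?normr_gt0.
have bdy : bounded_seq y.
  by exists (1 + B) => k; rewrite (le_trans (ler_normB _ _)) // normr1 lerD.
have dE1 := elementary_seq_elemmx i10 bx.
have i01 : i0 != i1 by rewrite eq_sym.
have dE2 := elementary_seq_elemmx i01 bdy.
apply: (elementary_seq_mulKl dE1); apply: (elementary_seq_mulKl dE2).
apply: SL_elementary_corner IH _ _ _ _.
- apply: bounded_mxseqM (elementary_seq_bounded dE2) _.
  by apply: bounded_mxseqM (elementary_seq_bounded dE1) _; exists B.
- by move=> k; rewrite !det_mulmx dM (elementary_seq_det dE1) (elementary_seq_det dE2) !mulr1.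
move=> k; apply/matrixP => i j; rewrite !ord1 [RHS]mxE mxE [usubmx _ _ _]mxE -/i0 /=.
rewrite !elemmx_mulE !eqxx (negPf i01) mulr0n !mul0r addr0 !mul1r.
by rewrite /x divfK // [_ + (1 - _)]addrC subrK mulr1 /y addrC subrK.
Qed.

(* If the corner entry is small, adding the row of a large entry of the first
   column to the first row makes the corner at least half as large. *)
Lemma uunip_corner_lb n (M : nat -> 'M[F]_(1 + n.+1)) :
  bounded_mxseq M -> (forall k, \det (M k) = 1) ->
  exists2 h : F, 0 < h & exists2 u : nat -> 'rV[F]_n.+1, bounded_mxseq u &
    forall k, h <= `|(block_mx 1%:M (u k) 0 1%:M *m M k) (lshift _ 0) (lshift _ 0)|.
Proof.
move=> [B bM] dM; have B0 : 0 <= B := le_trans (normr_ge0 _) (bM 0%N 0 0).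
have [d d0 hd] := det1_col_lb n.+1 B0.
set i0 := lshift n.+1 (0 : 'I_1); pose h := d / 2%:R.
have h0 : 0 < h by rewrite divr_gt0.
have dh : d - h = h by rewrite {1}[d]splitr addrK.
have hd_lt : h < d by rewrite -subr_gt0 dh.
pose small k := `|M k i0 i0| < h.
pose g k := odflt 0 [pick g : 'I_n.+1 | d <= `|M k (rshift 1 g) i0|].
have hg k : small k -> d <= `|M k (rshift 1 (g k)) i0|.
  move=> sk; rewrite /g; case: pickP => [g' -> //|/= none].
  have [l] := hd (M k) i0 (bM k) (dM k); rewrite -(splitK (l : 'I_(1 + n.+1))).
  case: (@fintype.split 1 n.+1 l) => [l'|g'] /=; last by rewrite (none g').
  by rewrite ord1 -/i0 => /le_lt_trans/(_ sk)/(lt_trans hd_lt); rewrite ltxx.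
exists h => //.
exists (fun k => if small k then delta_mx 0 (g k) else 0).
  exists 1 => k i j; case: ifP => _; rewrite !mxE ?normr0 ?ler01 //.
  by case: (_ && _); rewrite ?normr1 ?normr0 ?ler01.
move=> k; rewrite uunip_mulmxE; case: ifP => sk; last first.
  rewrite mul0mx mxE addr0; move: sk.
  by rewrite /small real_leNgt ?normr_real ?gtr0_real // => ->.
pose Mk : 'M[F]_(1 + n.+1) := M k.
rewrite -[M k]/Mk -(rowE (g k) (dsubmx Mk)) !mxE -/i0.
by rewrite -dh (addrC (Mk i0 i0)) (le_trans _ (lerB_normD _ _)) // lerB ?hg ?ltW.
Qed.

Lemma SL_elementaryS n : SL_elementary n -> SL_elementary n.+1.
Proof.
case: n => [_ M _ dM | n IH M bM dM].
  apply: (elementary_seq_eq _ (elementary_seq1 _)) => k.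
  by rewrite [M k]mx11_scalar -det_mx11 dM.
have [h h0 [u bu hu]] := uunip_corner_lb bM dM.
have dU := elementary_seq_uunip bu.
apply: (elementary_seq_mulKl dU); apply: (SL_elementary_pivot_unit IH h0 _ _ hu).
  exact: bounded_mxseqM (elementary_seq_bounded dU) bM.
by move=> k; rewrite det_mulmx dM (elementary_seq_det dU) mul1r.
Qed.

Theorem SL_elementary_all n : SL_elementary n.
Proof.
elim: n => [M _ _|n IH]; last exact: SL_elementaryS.
by apply: (elementary_seq_eq _ (elementary_seq1 _)) => k; apply/matrixP => -[].
Qed.

End ElementarySequences.

Section WeightedCoefficients.
Local Open Scope classical_set_scope.
Local Open Scope ring_scope.
Local Open Scope complex_scope.
Variable R : realType.
Local Notation C := (R[i]).
Variable p : nat -> R.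
Hypothesis p_pos : forall n, 0 < p n.

(* [f |-> (wcoef k f)_k] is the ring isomorphism from A(p) onto the bounded
   complex sequences: it turns the weighted Hadamard product into the
   pointwise product and [eps p] into the constant sequence 1. *)
Definition wcoef k (f : nat -> C) : C := (p k)%:C * f k.

Definition wcoef_mx n (A : hmat R n) k : 'M[C]_n := \matrix_(i, j) wcoef k (A i j).

Lemma pC_neq0 k : (p k)%:C != 0 :> C.
Proof. by rewrite eq_complex /= negb_and (gt_eqF (p_pos k)). Qed.

Lemma norm_pC k : `|(p k)%:C| = (p k)%:C :> C.
Proof. by rewrite ger0_norm // ler0c ltW. Qed.

Lemma wcoef_inj k f g : wcoef k f = wcoef k g -> f k = g k.
Proof. exact/mulfI/pC_neq0. Qed.

Lemma wcoefD k f g : wcoef k (hadd f g) = wcoef k f + wcoef k g.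
Proof. exact: mulrDr. Qed.

Lemma wcoef0 k : wcoef k (@hzero R) = 0.
Proof. exact: mulr0. Qed.

Lemma wcoefM k f g : wcoef k (hmul p f g) = wcoef k f * wcoef k g.
Proof. by rewrite /wcoef /hmul; ring. Qed.

Lemma wcoefZ k c f : wcoef k (hscale c f) = c * wcoef k f.
Proof. exact: mulrCA. Qed.

Lemma wcoef_eps k : wcoef k (eps p) = 1.
Proof. by rewrite /wcoef /eps -rmorphM mulfV ?(gt_eqF (p_pos k)). Qed.

Lemma det_wcoef_mx n (A : hmat R n) k : \det (wcoef_mx A k) = wcoef k (hdet p A).
Proof.
rewrite /hdet (big_morph (wcoef k) (wcoefD k) (wcoef0 k)); apply: eq_bigr => s _.
rewrite wcoefZ (big_morph (wcoef k) (wcoefM k) (wcoef_eps k)).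
by congr (_ * _); apply: eq_bigr => i _; rewrite mxE.
Qed.

Lemma wcoef_hmulmx n (A B : hmat R n) k :
  wcoef_mx (hmulmx p A B) k = wcoef_mx A k *m wcoef_mx B k.
Proof.
apply/matrixP => i j; rewrite !mxE (big_morph (wcoef k) (wcoefD k) (wcoef0 k)).
by apply: eq_bigr => l _; rewrite wcoefM !mxE.
Qed.

Lemma wcoef_hId n k : wcoef_mx (@hId R p n) k = 1%:M.
Proof.
by apply/matrixP => i j; rewrite !mxE /hId; case: eqP; rewrite ?wcoef_eps ?wcoef0.
Qed.

Lemma wcoef_helem n (a b : 'I_n) (c : nat -> C) k :
  wcoef_mx (helem p a b (fun k => c k / (p k)%:C)) k = elemmx a b (c k).
Proof.
apply/matrixP => i j; rewrite !mxE /helem wcoefD wcoefM /hId /hE.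
case: (i == j); case: (_ && _); rewrite ?wcoef_eps ?wcoef0 ?mulr0 ?mulr1 ?add0r ?addr0 //.
all: by rewrite /wcoef mulrC divfK ?pC_neq0.
Qed.

Lemma bounded_wcoef_mx n (A : hmat R n) :
  (forall i j, inA p (A i j)) -> bounded_mxseq (wcoef_mx A).
Proof.
move=> hA; have /choice [bnd hbnd] : forall x : 'I_n * 'I_n,
    exists M : R, forall k, (p k)%:C * `|A x.1 x.2 k| <= M%:C.
  by move=> x; case: (hA x.1 x.2) => _.
exists (\sum_x `|bnd x|)%:C => k i j.
rewrite mxE normrM norm_pC.
apply: le_trans (hbnd (i, j) k) _; rewrite lecR.
by rewrite (le_trans (ler_norm _)) // (bigD1 (i, j)) //= lerDl sumr_ge0.
Qed.

Hypothesis p_root : (fun n : nat => p n `^ (n%:R)^-1) @ \oo --> +oo.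

Lemma expr_le_p (r : R) : 0 < r -> exists N, forall k, (N < k)%N -> r ^+ k <= p k.
Proof.
move=> r0; move/cvgryPge: p_root => /(_ r) [N _ hN]; exists N => k Nk.
have k0 : k%:R != 0 :> R by rewrite pnatr_eq0 -lt0n (leq_ltn_trans _ Nk).
have := lerXn2r k (ltW r0) (powR_ge0 _ _) (hN k (ltnW Nk)).
rewrite -(powR_mulrn _ (powR_ge0 _ _)) -powRrM mulVf // powRr1 //; exact: ltW.
Qed.

(* Dividing a bounded sequence by p gives the coefficients of an entire
   function: |c_k / p_k| r^k <= B as soon as r^k <= p_k. *)
Lemma inA_div_p (c : nat -> C) : bounded_seq c -> inA p (fun k => c k / (p k)%:C).
Proof.
move=> [B bc]; have B0 : 0 <= B := le_trans (normr_ge0 _) (bc 0%N).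
have eB : B = (complex.Re B)%:C by rewrite RRe_real ?ger0_real.
have normE k : `|c k / (p k)%:C| = `|c k| / (p k)%:C.
  by rewrite normrM normfV norm_pC.
split; last by exists (complex.Re B) => k; rewrite normE mulrCA mulfV ?pC_neq0 ?mulr1 -?eB.
move=> r r0; have [N rp] := expr_le_p r0.
pose T k := `|c k / (p k)%:C| * (r ^+ k)%:C.
have T0 k : 0 <= T k by rewrite mulr_ge0 // ler0c exprn_ge0 // ltW.
have TB k : (N < k)%N -> T k <= B.
  move=> Nk; rewrite /T normE -mulrA -[leRHS]mulr1 ler_pM //.
    by rewrite mulr_ge0 ?invr_ge0 ?ler0c ?exprn_ge0 ?ltW.
  by rewrite mulrC ler_pdivrMr ?ltcR // mul1r lecR rp.
exists (complex.Re (B + \sum_(l < N.+1) T l)) => k.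
rewrite RRe_real ?ger0_real ?addr_ge0 ?sumr_ge0 // -/(T k).
case: (ltnP N k) => [/TB Tk|kN]; first by rewrite (le_trans Tk) // lerDl sumr_ge0.
by rewrite -[T k]add0r lerD // (bigD1 (Ordinal (kN : k < N.+1)%N)) //= lerDl sumr_ge0.
Qed.

Lemma elementary_seq_inElem n (M : nat -> 'M[C]_n) : elementary_seq M ->
  exists2 es : seq ('I_n * 'I_n * (nat -> C)),
    forall e, List.In e es -> elem_ok p e &
    forall k, wcoef_mx (foldr (fun e M => hmulmx p (helem p e.1.1 e.1.2 e.2) M)
                              (@hId R p n) es) k = M k.
Proof.
elim=> [|a b c {}M ab bc _ [es ok eM]].
  by exists [::] => // k; rewrite /= wcoef_hId.
exists ((a, b, fun k => c k / (p k)%:C) :: es) => [e [<-|/ok] //|k].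
  by split=> //; apply: inA_div_p.
by rewrite /= wcoef_hmulmx wcoef_helem eM.
Qed.

End WeightedCoefficients.

Local Open Scope classical_set_scope.
Local Open Scope ring_scope.

Theorem mainTheorem19 (R : realType) (p : nat -> R)
  (p_pos : forall n, 0 < p n)
  (p_root : (fun n : nat => p n `^ (n%:R)^-1) @ \oo --> +oo)
  (n : nat) (A : hmat R n) :
  inSLn p A -> inElem p A.
Proof.
move=> [hA detA].
have detA1 k : \det (wcoef_mx p A k) = 1 by rewrite (det_wcoef_mx p_pos) detA (wcoef_eps p_pos).
have [es es_ok eA] :=
  elementary_seq_inElem p_pos p_root (SL_elementary_all (bounded_wcoef_mx p_pos hA) detA1).
exists es; split=> //; apply/funext => i; apply/funext => j; apply/funext => k.
by apply: (wcoef_inj p_pos); move/matrixP: (eA k) => /(_ i j); rewrite !mxE.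
Qed.
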